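(* Let $(\rho,\mathbf{u},\Sigma)$ be a smooth solution on $\Omega\subset\mathbb{R}^d$, with $\rho>0$ and $\alpha>0$, of the pressureless HRE system $$\partial_t\rho+\nabla\cdot(\rho\mathbf{u})=0,\quad \partial_t(\rho\mathbf{u})+\nabla\cdot(\rho\mathbf{u}\otimes\mathbf{u}+\Sigma\,\mathbb{I})=0,\quad \rho^{-1}\Sigma-\alpha\nabla\cdot(\rho^{-1}\nabla\Sigma)=\alpha\,\mathrm{tr}\big((\nabla\mathbf{u})^2\big).$$ Then the generalized kinetic energy density $K_E=\frac12\rho\big(|\mathbf{u}|^2+\alpha(\nabla\cdot\mathbf{u})^2\big)$ satisfies the local conservation law $$\partial_t K_E+\nabla\cdot\big((K_E+\Sigma)\mathbf{u}\big)=0.$$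
   Context: $\nabla\mathbf{u}$ is the velocity gradient matrix, $\mathbb{I}$ the identity matrix, and $(\nabla\cdot(\mathbf{a}\otimes\mathbf{b}))_i=\sum_j\partial_j(a_ib_j)$. *)

From HB Require Import structures.
From mathcomp Require Import all_boot all_order all_algebra.
From mathcomp Require Import all_classical all_reals all_analysis.
Set Implicit Arguments. Unset Strict Implicit. Unset Printing Implicit Defensive.
Import Order.TTheory GRing.Theory Num.Theory.
Import numFieldNormedType.Exports.
Local Open Scope ring_scope.
Local Open Scope classical_set_scope.

Section HRE.
Variables (R : realType) (d : nat).

Definition pt := (R * 'rV[R]_d)%type.

Definition evec (i : 'I_d) : 'rV[R]_d := delta_mx 0 i.

Inductive dop := Dt | Dx of 'I_d.

Definition line (o : dop) (f : pt -> R) (p : pt) : R -> R :=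
  match o with
  | Dt => fun s => f (s, p.2)
  | Dx i => fun h => f (p.1, p.2 + h *: evec i)
  end.

Definition base (o : dop) (p : pt) : R :=
  match o with Dt => p.1 | Dx i => 0 end.

Definition pd (o : dop) (f : pt -> R) (p : pt) : R :=
  derive1 (line o f p) (base o p).

Definition dt (f : pt -> R) := pd Dt f.
Definition dx (i : 'I_d) (f : pt -> R) := pd (Dx i) f.

Definition pds (os : seq dop) (f : pt -> R) : pt -> R := foldr pd f os.

(* f is C^infty on the (open) space-time domain D: every iterated partial
   derivative exists (is differentiable in each coordinate direction) and is
   jointly continuous at every point of D *)
Definition smooth_on (D : set pt) (f : pt -> R) : Prop :=
  forall (os : seq dop) (p : pt), D p ->
    {for p, continuous (pds os f)} /\
    forall o : dop, derivable (line o (pds os f) p) (base o p) 1.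

End HRE.

(* Write [w] for the divergence of [u] and [D/Dt] for the material derivative
   [dt + u . grad].  The continuity equation turns every flux
   [dt (rho f) + div (rho f u)] into [rho Df/Dt]; so the momentum equation reads
   [rho Du/Dt + grad Sigma = 0], and the energy flux of the statement becomes
   [rho (u . Du/Dt + alpha w Dw/Dt) + u . grad Sigma + Sigma w].
   Taking the divergence of [grad Sigma / rho = - Du/Dt], and commuting [d_i]
   with [D/Dt] (the commutator is [d_i u_k d_k]), gives
   [div (grad Sigma / rho) = - Dw/Dt - tr ((grad u)^2)], so the equation for
   [Sigma] collapses to [Sigma + alpha rho Dw/Dt = 0].  The energy flux is then
   [u . (rho Du/Dt + grad Sigma) + w (Sigma + alpha rho Dw/Dt) = 0].
   Mixed partial derivatives of smooth functions commute (Schwarz), which is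
   proved from the second difference quotient by two mean value arguments. *)

From HB Require Import structures.
From mathcomp Require Import all_boot all_order all_algebra.
From mathcomp Require Import all_classical all_reals all_analysis.
From mathcomp Require Import ring lra.
Import Order.TTheory GRing.Theory Num.Theory.
Import numFieldNormedType.Exports.
Local Open Scope ring_scope.
Local Open Scope classical_set_scope.
Set Implicit Arguments. Unset Strict Implicit. Unset Printing Implicit Defensive.

Section RealLine.
Variable R : realType.
Implicit Types (F G : R -> R) (a b x : R).

Lemma derive1_translate G a b : derive1 (fun r => G (r + a)) b = derive1 G (b + a).
Proof. by rewrite /derive1 /=; under eq_fun => h do rewrite -addrA. Qed.

Lemma derivable_translate G a b :
  derivable (fun r => G (r + a)) b 1 <-> derivable G (b + a) 1.
Proof. by rewrite /derivable /=; under eq_fun => h do rewrite -addrA. Qed.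

Lemma derive1_add F G x : derivable F x 1 -> derivable G x 1 ->
  derive1 (fun s => F s + G s) x = derive1 F x + derive1 G x.
Proof. by move=> dF dG; rewrite !derive1E -deriveD. Qed.

Lemma derive1_mul F G x : derivable F x 1 -> derivable G x 1 ->
  derive1 (fun s => F s * G s) x = derive1 F x * G x + F x * derive1 G x.
Proof.
move=> dF dG; rewrite !derive1E -[fun s => _]/(F * G) (deriveM dF dG).
by rewrite addrC [_ *: _]mulrC.
Qed.

Lemma derive1_opp F x : derivable F x 1 -> derive1 (fun s => - F s) x = - derive1 F x.
Proof. by move=> dF; rewrite !derive1E -deriveN. Qed.

Lemma MVT_from0 (g : R -> R) (t e : R) : 0 < t -> t < e ->
  (forall x, `|x| < e -> derivable g x 1) ->
  exists2 c, 0 < c < t & g t - g 0 = derive1 g c * t.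
Proof.
move=> t0 te dg.
have dx x : 0 <= x <= t -> derivable g x 1.
  by move=> /andP[x0 xt]; apply: dg; rewrite ger0_norm //; lra.
have [c] : exists2 c, c \in `]0, t[%R & g t - g 0 = derive1 g c * (t - 0).
  apply: MVT => //.
  - move=> x; rewrite in_itv /= => /andP[x0 xt]; apply: DeriveDef.
      by apply: dx; rewrite !ltW.
    by rewrite derive1E.
  - apply: derivable_within_continuous => x; rewrite in_itv /= => /andP[x0 xt].
    by apply: dx; rewrite x0 xt.
by rewrite in_itv /= subr0 => /andP[c0 ct] E; exists c; rewrite ?c0.
Qed.

Section SecondDifference.
Variables (F : R -> R -> R) (e0 : R).
Let F12 s h := derive1 (fun h' => derive1 (fun s' => F s' h') s) h.
Hypothesis e0_gt0 : 0 < e0.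
Hypothesis F_derivable1 : forall s h, `|s| < e0 -> `|h| < e0 ->
  derivable (fun s' => F s' h) s 1.
Hypothesis F_derivable12 : forall s h, `|s| < e0 -> `|h| < e0 ->
  derivable (fun h' => derive1 (fun s' => F s' h') s) h 1.

(* Two applications of the mean value theorem write the second difference as
   [t ^+ 2 * F12 xi eta] for some [0 < xi, eta < t]. *)
Lemma second_difference_approx e : 0 < e ->
  (exists2 e1, 0 < e1 & forall s h, `|s| < e1 -> `|h| < e1 -> `|F12 s h - F12 0 0| < e) ->
  exists2 e2, 0 < e2 & forall t, 0 < t -> t < e2 ->
    `|(F t t - F t 0 - F 0 t + F 0 0) / t ^+ 2 - F12 0 0| < e.
Proof.
move=> e_gt0 [e1 e1_gt0 F12_near].
exists (Num.min e0 e1) => [|t t0]; first by rewrite lt_min e0_gt0 e1_gt0.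
rewrite lt_min => /andP[te0 te1].
have n0 : `|0 : R| < e0 by rewrite normr0.
have nt : `|t| < e0 by rewrite ger0_norm // ltW.
have [xi /andP[xi0 xit] Exi] := @MVT_from0 (fun s => F s t - F s 0) t e0 t0 te0
   (fun x hx => derivableD (F_derivable1 hx nt) (derivableN (F_derivable1 hx n0))).
have nxi : `|xi| < e0 by rewrite ger0_norm ?ltW //; lra.
have dF0 := F_derivable1 nxi n0; have dFt := F_derivable1 nxi nt.
have dNF0 : derivable (fun s => - F s 0) xi 1 by exact: derivableN.
rewrite derive1_add ?derive1_opp // in Exi.
have [eta /andP[eta0 etat] Eeta] := @MVT_from0 (fun h => derive1 (fun s' => F s' h) xi)
   t e0 t0 te0 (fun x hx => F_derivable12 nxi hx).
have -> : (F t t - F t 0 - F 0 t + F 0 0) / t ^+ 2 = F12 xi eta.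
  transitivity (((F t t - F t 0) - (F 0 t - F 0 0)) / t ^+ 2); first by congr (_ / _); ring.
  by rewrite Exi Eeta /F12; field; rewrite gt_eqF.
by apply: F12_near; rewrite ger0_norm ?ltW //; lra.
Qed.

End SecondDifference.
End RealLine.

Lemma nbhs_setX (T U : topologicalType) (A : set T) (B : set U) (p : T * U) :
  nbhs p.1 A -> nbhs p.2 B -> nbhs p [set q | A q.1 /\ B q.2].
Proof. by move=> NA NB; exists (A, B) => //; case=> a b /= []. Qed.

Section PartialDerivatives.
Variables (R : realType) (d : nat).
Implicit Types (o : dop d) (f g : pt R d -> R) (p q : pt R d) (D : set (pt R d)).

Definition dvec o : pt R d := match o with Dt => (1, 0) | Dx i => (0, evec R i) end.

Definition translate o (h : R) p : pt R d := p + h *: dvec o.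

Lemma translate0 o p : translate o 0 p = p.
Proof. by rewrite /translate scale0r addr0. Qed.

Lemma translateD o a b p : translate o a (translate o b p) = translate o (a + b) p.
Proof. by rewrite /translate -addrA -scalerDl [b + a]addrC. Qed.

Lemma translateC o1 o2 a b p :
  translate o1 a (translate o2 b p) = translate o2 b (translate o1 a p).
Proof. by rewrite /translate -!addrA [X in _ + X]addrC. Qed.

Lemma line_translate o f p : line o f p = fun s => f (translate o (s - base o p) p).
Proof.
apply/funext => s; case: o => [|i]; case: p => t x /=; congr f;
  rewrite /translate /dvec /=; congr (_, _) => /=.
- by rewrite [_%:A]mulr1 addrC subrK.
- by rewrite scaler0 addr0.
- by rewrite scaler0 addr0.
- by rewrite subr0.
Qed.

Lemma pd_translate o f p : pd o f p = derive1 (fun h => f (translate o h p)) 0.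
Proof.
rewrite /pd line_translate.
by rewrite -[0](subrr (base o p)) -(derive1_translate _ (- base o p)).
Qed.

Definition pderivable o f p := derivable (line o f p) (base o p) 1.

Lemma pderivable_translate o f p :
  pderivable o f p <-> derivable (fun h => f (translate o h p)) 0 1.
Proof.
rewrite /pderivable line_translate.
by rewrite -[0](subrr (base o p)) -(derivable_translate _ (- base o p)).
Qed.

Lemma line_base o f p : line o f p (base o p) = f p.
Proof. by rewrite line_translate subrr translate0. Qed.

Lemma line_map2 o (F : R -> R -> R) f g p :
  line o (fun q => F (f q) (g q)) p = fun s => F (line o f p s) (line o g p s).
Proof. by case: o. Qed.

Lemma line_cst o (c : R) p : line o (fun _ => c) p = fun _ => c.
Proof. by case: o. Qed.

Lemma pderivable_cst o (c : R) p : pderivable o (fun _ => c) p.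
Proof. by rewrite /pderivable line_cst; apply: derivable_cst. Qed.

Lemma pd_cst o (c : R) p : pd o (fun _ => c) p = 0.
Proof. by rewrite /pd line_cst derive1_cst. Qed.

Lemma pderivableD o f g p : pderivable o f p -> pderivable o g p ->
  pderivable o (fun q => f q + g q) p.
Proof. by move=> df dg; rewrite /pderivable (line_map2 o +%R); apply: derivableD. Qed.

Lemma pdD o f g p : pderivable o f p -> pderivable o g p ->
  pd o (fun q => f q + g q) p = pd o f p + pd o g p.
Proof. by move=> df dg; rewrite /pd (line_map2 o +%R) derive1_add. Qed.

Lemma pderivableM o f g p : pderivable o f p -> pderivable o g p ->
  pderivable o (fun q => f q * g q) p.
Proof. by move=> df dg; rewrite /pderivable (line_map2 o *%R); apply: derivableM. Qed.

Lemma pdM o f g p : pderivable o f p -> pderivable o g p ->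
  pd o (fun q => f q * g q) p = pd o f p * g p + f p * pd o g p.
Proof. by move=> df dg; rewrite /pd (line_map2 o *%R) derive1_mul // !line_base. Qed.

Lemma pderivableZ o (c : R) f p : pderivable o f p -> pderivable o (fun q => c * f q) p.
Proof. by move=> df; apply: pderivableM => //; apply: pderivable_cst. Qed.

Lemma pdN o f p : pderivable o f p -> pd o (fun q => - f q) p = - pd o f p.
Proof.
move=> df; have -> : (fun q => - f q) = (fun q => -1 * f q).
  by apply/funext => q; rewrite mulN1r.
by rewrite pdM ?pd_cst ?mul0r ?add0r ?mulN1r //; apply: pderivable_cst.
Qed.

Lemma pderivable_sum (I : eqType) (r : seq I) o (F : I -> pt R d -> R) p :
  (forall i, pderivable o (F i) p) -> pderivable o (fun q => \sum_(i <- r) F i q) p.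
Proof.
move=> dF; elim: r => [|a r IHr].
  by under eq_fun => q do rewrite big_nil; apply: pderivable_cst.
by under eq_fun => q do rewrite big_cons; apply: pderivableD.
Qed.

Lemma pd_sum (I : eqType) (r : seq I) o (F : I -> pt R d -> R) p :
  (forall i, pderivable o (F i) p) ->
  pd o (fun q => \sum_(i <- r) F i q) p = \sum_(i <- r) pd o (F i) p.
Proof.
move=> dF; elim: r => [|a r IHr].
  by under eq_fun => q do rewrite big_nil; rewrite pd_cst big_nil.
under eq_fun => q do rewrite big_cons.
by rewrite pdD ?big_cons ?IHr //; apply: pderivable_sum.
Qed.

Lemma near_translate2 o1 o2 p (N : set (pt R d)) : nbhs p N ->
  exists2 e : R, 0 < e & forall s h, `|s| < e -> `|h| < e ->
    N (translate o1 s (translate o2 h p)).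
Proof.
move=> /nbhs_ballP [r /= r0 rN].
have := normr_ge0 (dvec o1); have := normr_ge0 (dvec o2).
pose c := `|dvec o1| + `|dvec o2| + 1 => n2 n1; have c0 : 0 < c by rewrite /c; lra.
exists (r / c) => [|s h hs hh]; first exact: divr_gt0.
apply: rN; rewrite -ball_normE /= /translate -addrA opprD addrA subrr add0r normrN.
apply: (le_lt_trans (ler_normD _ _)); rewrite !normrZ.
have := ler_wpM2r (normr_ge0 (dvec o2)) (ltW hh).
have := ler_wpM2r (normr_ge0 (dvec o1)) (ltW hs).
have : r / c * c = r by rewrite divfK // gt_eqF.
have := divr_gt0 r0 c0; rewrite /c; lra.
Qed.

Lemma eq_pd_near D f g o p : nbhs p D -> (forall q, D q -> f q = g q) ->
  pd o f p = pd o g p.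
Proof.
move=> pD fg; have [e e0 eD] := near_translate2 o o pD.
rewrite !pd_translate !derive1E; apply: near_eq_derive.
apply/nbhs_ballP; exists e => //= h; rewrite -ball_normE /= sub0r normrN => he.
by apply: fg; move: (eD h 0 he); rewrite normr0 translate0; apply.
Qed.

Definition second_difference o1 o2 f p t :=
  f (translate o1 t (translate o2 t p)) - f (translate o1 t p) - f (translate o2 t p) + f p.

Lemma second_differenceC o1 o2 f p t :
  second_difference o2 o1 f p t = second_difference o1 o2 f p t.
Proof. by rewrite /second_difference (translateC o2 o1); ring. Qed.

End PartialDerivatives.

Lemma smooth_pderivable (R : realType) (d : nat) (D : set (pt R d)) (f : pt R d -> R)
    (p : pt R d) :
  smooth_on D f -> D p -> forall (os : seq (dop d)) o, pderivable o (pds os f) p.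
Proof. by move=> fD Dp os; exact: (fD os p Dp).2. Qed.

Arguments smooth_pderivable {R d D f p}.

Section MixedPartials.
Variables (R : realType) (d : nat).
Implicit Types (o : dop d) (f : pt R d -> R) (p : pt R d) (D : set (pt R d)).

Lemma second_difference_pd D f o1 o2 p : smooth_on D f -> nbhs p D ->
  forall e, 0 < e -> exists2 e2, 0 < e2 & forall t, 0 < t -> t < e2 ->
    `|second_difference o1 o2 f p t / t ^+ 2 - pd o2 (pd o1 f) p| < e.
Proof.
move=> fD pD e e0; have Dp : D p := nbhs_singleton pD.
have [e1 e1_gt0 e1D] := near_translate2 o1 o2 pD.
pose F s h := f (translate o1 s (translate o2 h p)).
have F1E s h : derive1 (fun s' => F s' h) s = pd o1 f (translate o1 s (translate o2 h p)).
  rewrite -[s]add0r -derive1_translate pd_translate add0r.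
  by congr (derive1 _ 0); apply/funext => r; rewrite /F translateD.
have F12E s h : derive1 (fun h' => derive1 (fun s' => F s' h') s) h
    = pd o2 (pd o1 f) (translate o1 s (translate o2 h p)).
  under eq_fun => h' do rewrite F1E.
  rewrite -[h]add0r -derive1_translate [RHS]pd_translate add0r.
  by congr (derive1 _ 0); apply/funext => r; rewrite (translateC o2 o1) translateD.
have dF1 s h : `|s| < e1 -> `|h| < e1 -> derivable (fun s' => F s' h) s 1.
  move=> hs hh; rewrite -[s]add0r -derivable_translate.
  have -> : (fun r => F (r + s) h)
      = fun r => f (translate o1 r (translate o1 s (translate o2 h p))).
    by apply/funext => r; rewrite /F translateD.
  exact: (pderivable_translate _ _ _).1 (smooth_pderivable fD (e1D s h hs hh) [::] o1).
have dF12 s h : `|s| < e1 -> `|h| < e1 ->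
    derivable (fun h' => derive1 (fun s' => F s' h') s) h 1.
  move=> hs hh; rewrite -[h]add0r -derivable_translate.
  have -> : (fun r => derive1 (fun s' => F s' (r + h)) s)
      = fun r => pd o1 f (translate o2 r (translate o1 s (translate o2 h p))).
    by apply/funext => r; rewrite F1E -translateD translateC.
  exact: (pderivable_translate _ _ _).1 (smooth_pderivable fD (e1D s h hs hh) [:: o1] o2).
have F12_near : exists2 e3, 0 < e3 & forall s h, `|s| < e3 -> `|h| < e3 ->
    `|derive1 (fun h' => derive1 (fun s' => F s' h') s) h
      - derive1 (fun h' => derive1 (fun s' => F s' h') 0) 0| < e.
  have /cvgrPdist_lt /(_ e e0) := (fD [:: o2; o1] p Dp).1.
  move=> /(near_translate2 o1 o2) [e3 e3_gt0 e3D]; exists e3 => // s h hs hh.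
  by rewrite !F12E !translate0 distrC; exact: e3D.
have [e2 e2_gt0 approx] := second_difference_approx e1_gt0 dF1 dF12 e0 F12_near.
exists e2 => // t t0 te2; move: (approx t t0 te2).
by rewrite F12E !translate0 /second_difference /F !translate0.
Qed.

(* Schwarz's theorem: both mixed partials are limits of the same second
   difference quotient. *)
Lemma pd_comm D f o1 o2 p : smooth_on D f -> nbhs p D ->
  pd o2 (pd o1 f) p = pd o1 (pd o2 f) p.
Proof.
move=> fD pD; apply/eqP; rewrite -subr_eq0 -normr_le0.
apply/ler_addgt0Pr => e e0; rewrite add0r.
have e20 : 0 < e / 2 by rewrite divr_gt0.
have [a a0 Ha] := second_difference_pd o1 o2 fD pD e20.
have [b b0 Hb] := second_difference_pd o2 o1 fD pD e20.
pose t := Num.min a b / 2.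
have t0 : 0 < t by rewrite divr_gt0 // lt_min a0 b0.
have : t < Num.min a b by rewrite ltr_pdivrMr // ltr_pMr ?ltr1n // lt_min a0 b0.
rewrite lt_min => /andP[ta tb].
move: (Ha t t0 ta) (Hb t t0 tb); rewrite (second_differenceC o1 o2).
set x := second_difference o1 o2 f p t / t ^+ 2 => Hxa Hxb.
have := ler_normB (x - pd o1 (pd o2 f) p) (x - pd o2 (pd o1 f) p).
have -> : x - pd o1 (pd o2 f) p - (x - pd o2 (pd o1 f) p)
  = pd o2 (pd o1 f) p - pd o1 (pd o2 f) p by ring.
lra.
Qed.

End MixedPartials.

Definition divergence (R : realType) (d : nat) (v : 'I_d -> pt R d -> R) (p : pt R d) : R :=
  \sum_(i < d) dx i (v i) p.

Section MaterialDerivative.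
Variables (R : realType) (d : nat) (u : 'I_d -> pt R d -> R).
Implicit Types (f g : pt R d -> R) (p : pt R d).

Definition material f p := dt f p + \sum_(j < d) u j p * dx j f p.

Lemma material_cst (c : R) p : material (fun _ => c) p = 0.
Proof. by rewrite /material /dt /dx pd_cst big1 ?addr0 // => j _; rewrite pd_cst mulr0. Qed.

Lemma materialD f g p : (forall o, pderivable o f p) -> (forall o, pderivable o g p) ->
  material (fun q => f q + g q) p = material f p + material g p.
Proof.
move=> df dg; rewrite /material /dt /dx pdD //.
under eq_bigr => j _ do rewrite pdD // mulrDr.
by rewrite big_split /= addrACA.
Qed.

Lemma materialM f g p : (forall o, pderivable o f p) -> (forall o, pderivable o g p) ->
  material (fun q => f q * g q) p = material f p * g p + f p * material g p.
Proof.
move=> df dg; rewrite /material /dt /dx pdM //.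
under eq_bigr => j _ do rewrite pdM //.
rewrite mulrDl mulrDr mulr_suml mulr_sumr.
rewrite [in RHS]addrACA -[in RHS]big_split /=; congr (_ + _).
by apply: eq_bigr => j _; ring.
Qed.

Lemma material_sum (F : 'I_d -> pt R d -> R) p : (forall o i, pderivable o (F i) p) ->
  material (fun q => \sum_(i < d) F i q) p = \sum_(i < d) material (F i) p.
Proof.
move=> dF; have pdF o := pd_sum (index_enum 'I_d) (dF o).
rewrite /material /dt /dx.
under eq_bigr => j _ do rewrite pdF mulr_sumr.
by rewrite pdF exchange_big -big_split.
Qed.

Lemma materialZ (c : R) f p : (forall o, pderivable o f p) ->
  material (fun q => c * f q) p = c * material f p.
Proof.
move=> df; rewrite materialM ?material_cst ?mul0r ?add0r //.
by move=> o; apply: pderivable_cst.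
Qed.

Lemma material_sqr f p : (forall o, pderivable o f p) ->
  material (fun q => f q * f q) p = 2 * f p * material f p.
Proof. by move=> df; rewrite materialM //; ring. Qed.

End MaterialDerivative.

Section HRE.
Variables (R : realType) (d : nat) (D : set (pt R d)).
Variables (rho Sigma : pt R d -> R) (u : 'I_d -> pt R d -> R) (alpha : R).
Hypothesis D_nbhs : forall p, D p -> nbhs p D.
Hypotheses (rho_smooth : smooth_on D rho) (Sigma_smooth : smooth_on D Sigma).
Hypothesis u_smooth : forall i, smooth_on D (u i).
Hypothesis rho_neq0 : forall p, D p -> rho p != 0.
Hypothesis continuity : forall p, D p ->
  dt rho p + \sum_(j < d) dx j (fun q => rho q * u j q) p = 0.
Hypothesis momentum : forall (i : 'I_d) p, D p ->
  dt (fun q => rho q * u i q) p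
  + \sum_(j < d) dx j (fun q => rho q * u i q * u j q
                                + (if i == j then Sigma q else 0)) p = 0.
Hypothesis Sigma_equation : forall p, D p ->
  Sigma p / rho p - alpha * \sum_(j < d) dx j (fun q => dx j Sigma q / rho q) p
  = alpha * \sum_(i < d) \sum_(j < d) dx j (u i) p * dx i (u j) p.

Lemma conservative_form_material f p : D p -> (forall o, pderivable o f p) ->
  dt (fun q => rho q * f q) p + \sum_(j < d) dx j (fun q => rho q * f q * u j q) p
  = rho p * material u f p.
Proof.
move=> Dp df; have drho := smooth_pderivable rho_smooth Dp [::].
have du j := smooth_pderivable (u_smooth j) Dp [::].
have flux j : dx j (fun q => rho q * f q * u j q) p
    = dx j (fun q => rho q * u j q) p * f p + rho p * (u j p * dx j f p).
  have -> : (fun q => rho q * f q * u j q) = fun q => rho q * u j q * f q.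
    by apply/funext => q; ring.
  rewrite /dx pdM; [ring | exact: pderivableM (drho _) (du j _) | exact: df].
rewrite (eq_bigr _ (fun j _ => flux j)) big_split /= -mulr_suml -mulr_sumr.
rewrite /dt pdM // /material /dt.
transitivity (rho p * (pd (Dt d) f p + \sum_(j < d) u j p * dx j f p)
              + f p * (dt rho p + \sum_(j < d) dx j (fun q => rho q * u j q) p)).
  by rewrite /dt; ring.
by rewrite continuity // mulr0 addr0.
Qed.

Lemma momentum_material i p : D p -> rho p * material u (u i) p + dx i Sigma p = 0.
Proof.
move=> Dp; have drho := smooth_pderivable rho_smooth Dp [::].
have du j := smooth_pderivable (u_smooth j) Dp [::].
have dS := smooth_pderivable Sigma_smooth Dp [::].
apply: etrans (momentum i Dp).
rewrite -(conservative_form_material Dp (du i)) -addrA; congr (_ + _).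
have split_flux j : dx j (fun q => rho q * u i q * u j q + (if i == j then Sigma q else 0)) p
    = dx j (fun q => rho q * u i q * u j q) p + (if i == j then dx j Sigma p else 0).
  rewrite /dx pdD; [by case: eqP => _; rewrite ?pd_cst | |].
  - exact: pderivableM (pderivableM (drho _) (du i _)) (du j _).
  - by case: eqP => _; [exact: dS | exact: pderivable_cst].
rewrite (eq_bigr _ (fun j _ => split_flux j)) big_split /=; congr (_ + _).
by rewrite -big_mkcond (big_pred1 i) // => j; rewrite /= eq_sym.
Qed.

Lemma pderivable_material f o p : smooth_on D f -> D p -> pderivable o (material u f) p.
Proof.
move=> fD Dp; rewrite /material; apply: pderivableD.
  exact: smooth_pderivable fD Dp [:: Dt d] o.
apply: pderivable_sum => j; apply: pderivableM.
- exact: smooth_pderivable (u_smooth j) Dp [::] o.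
- exact: smooth_pderivable fD Dp [:: Dx j] o.
Qed.

Lemma dx_dx_Sigma_div_rho j p : D p ->
  dx j (fun q => dx j Sigma q / rho q) p = - dx j (material u (u j)) p.
Proof.
move=> Dp; rewrite /dx -pdN; last exact: pderivable_material.
apply: (eq_pd_near _ (D_nbhs Dp)) => q Dq.
have /eqP := momentum_material j Dq; rewrite /dx addrC addr_eq0 => /eqP ->.
by rewrite mulNr mulrAC divff ?mul1r // rho_neq0.
Qed.

Lemma dx_material f i p : smooth_on D f -> D p ->
  dx i (material u f) p = material u (dx i f) p + \sum_(k < d) dx i (u k) p * dx k f p.
Proof.
move=> fD Dp; have Dpn := D_nbhs Dp.
have df os o := smooth_pderivable fD Dp os o.
have du k os o := smooth_pderivable (u_smooth k) Dp os o.
have dterm k : pderivable (Dx i) (fun q => u k q * pd (Dx k) f q) p.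
  exact: pderivableM (du k [::] _) (df [:: Dx k] _).
rewrite /material /dx /dt (pdD (df [:: Dt d] _) (pderivable_sum dterm)) (pd_sum _ dterm).
under eq_bigr => k _ do
  rewrite (pdM (du k [::] _) (df [:: Dx k] _)) (pd_comm (Dx k) (Dx i) fD Dpn).
by rewrite (pd_comm (Dt d) (Dx i) fD Dpn) big_split /=; ring.
Qed.

Lemma Sigma_material_divergence p : D p ->
  Sigma p + alpha * rho p * material u (divergence u) p = 0.
Proof.
move=> Dp.
have material_div : material u (divergence u) p = \sum_(j < d) material u (dx j (u j)) p.
  by apply: material_sum => o j; exact: smooth_pderivable (u_smooth j) Dp [:: Dx j] o.
have := Sigma_equation Dp.
rewrite (eq_bigr _ (fun j _ => dx_dx_Sigma_div_rho j Dp)) sumrN.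
rewrite (eq_bigr _ (fun j _ => dx_material j (u_smooth j) Dp)) big_split /= -material_div.
have -> : \sum_(j < d) \sum_(k < d) dx j (u k) p * dx k (u j) p
    = \sum_(i < d) \sum_(j < d) dx j (u i) p * dx i (u j) p.
  by apply: eq_bigr => j _; apply: eq_bigr => k _; exact: mulrC.
move=> E; have {}E : Sigma p / rho p + alpha * material u (divergence u) p = 0.
  by move: E; rewrite mulrN opprK mulrDr; lra.
transitivity (rho p * (Sigma p / rho p + alpha * material u (divergence u) p)).
  by field; exact: rho_neq0.
by rewrite E mulr0.
Qed.

Lemma pderivable_divergence o p : D p -> pderivable o (divergence u) p.
Proof.
move=> Dp; apply: pderivable_sum => i.
exact: smooth_pderivable (u_smooth i) Dp [:: Dx i] o.
Qed.

Definition specific_energy q :=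
  2^-1 * (\sum_(i < d) u i q * u i q + alpha * (divergence u q * divergence u q)).

Lemma pderivable_specific_energy o p : D p -> pderivable o specific_energy p.
Proof.
move=> Dp; have dw : pderivable o (divergence u) p := pderivable_divergence Dp.
apply: pderivableZ; apply: pderivableD; last exact: pderivableZ (pderivableM dw dw).
apply: pderivable_sum => i.
have dui : pderivable o (u i) p := smooth_pderivable (u_smooth i) Dp [::] o.
by apply: pderivableM.
Qed.

Lemma material_specific_energy p : D p ->
  material u specific_energy p = \sum_(i < d) u i p * material u (u i) p
                                 + alpha * (divergence u p * material u (divergence u) p).
Proof.
move=> Dp; have du i o : pderivable o (u i) p := smooth_pderivable (u_smooth i) Dp [::] o.
have dw o : pderivable o (divergence u) p := pderivable_divergence Dp.
have du2 o i : pderivable o (fun q => u i q * u i q) p := pderivableM (du i o) (du i o).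
have dw2 o : pderivable o (fun q => divergence u q * divergence u q) p.
  exact: pderivableM (dw o) (dw o).
rewrite /specific_energy materialZ => [|o]; last first.
  exact: pderivableD (pderivable_sum (du2 o)) (pderivableZ (dw2 o)).
rewrite materialD => [||o]; [|exact: (fun o => pderivable_sum (du2 o)) | exact: pderivableZ].
rewrite materialZ // material_sqr // material_sum //.
under eq_bigr => i _ do rewrite (material_sqr _ (du i)) -mulrA.
by rewrite -mulr_sumr; field.
Qed.

Lemma kinetic_energy_balance p : D p ->
  let KE := fun q => 2^-1 * rho q * (\sum_(i < d) u i q ^+ 2
                                     + alpha * (\sum_(i < d) dx i (u i) q) ^+ 2) in
  dt KE p + \sum_(j < d) dx j (fun q => (KE q + Sigma q) * u j q) p = 0.
Proof.
move=> Dp KE; set phi := specific_energy.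
have drho o : pderivable o rho p := smooth_pderivable rho_smooth Dp [::] o.
have dSigma o : pderivable o Sigma p := smooth_pderivable Sigma_smooth Dp [::] o.
have du i o : pderivable o (u i) p := smooth_pderivable (u_smooth i) Dp [::] o.
have dphi o : pderivable o phi p := pderivable_specific_energy Dp.
have -> : KE = fun q => rho q * phi q.
  by apply/funext => q; rewrite /KE /phi /specific_energy /divergence !expr2; ring.
have flux j : dx j (fun q => (rho q * phi q + Sigma q) * u j q) p
    = dx j (fun q => rho q * phi q * u j q) p
      + (dx j Sigma p * u j p + Sigma p * dx j (u j) p).
  have -> : (fun q => (rho q * phi q + Sigma q) * u j q)
      = fun q => rho q * phi q * u j q + Sigma q * u j q by apply/funext => q; ring.
  rewrite /dx (pdD (pderivableM (pderivableM (drho _) (dphi _)) (du j _))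
                  (pderivableM (dSigma _) (du j _))).
  by rewrite (pdM (dSigma _) (du j _)).
rewrite (eq_bigr _ (fun j _ => flux j)) big_split /= addrA.
rewrite conservative_form_material // material_specific_energy //.
have sum_flux : \sum_(j < d) (dx j Sigma p * u j p + Sigma p * dx j (u j) p)
    = \sum_(j < d) dx j Sigma p * u j p + Sigma p * divergence u p.
  by rewrite big_split /= -mulr_sumr.
have sum_momentum : rho p * \sum_(i < d) u i p * material u (u i) p
    + \sum_(i < d) dx i Sigma p * u i p = 0.
  rewrite mulr_sumr -big_split; apply: big1 => i _ /=.
  transitivity (u i p * (rho p * material u (u i) p + dx i Sigma p)); first ring.
  by rewrite momentum_material // mulr0.
rewrite sum_flux.
transitivity (rho p * \sum_(i < d) u i p * material u (u i) p
              + \sum_(i < d) dx i Sigma p * u i p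
              + divergence u p * (Sigma p + alpha * rho p * material u (divergence u) p)).
  ring.
by rewrite sum_momentum Sigma_material_divergence // mulr0 addr0.
Qed.

End HRE.

Theorem mainTheorem8 (R : realType) (d : nat)
  (Omega : set 'rV[R]_d) (I : set R)
  (rho Sigma : pt R d -> R) (u : 'I_d -> pt R d -> R) (alpha : R) :
  open Omega -> open I -> 0 < alpha ->
  let D : set (pt R d) := [set p | I p.1 /\ Omega p.2] in
  smooth_on D rho -> smooth_on D Sigma -> (forall i, smooth_on D (u i)) ->
  (forall p, D p -> 0 < rho p) ->
  (forall p, D p ->
     dt rho p + \sum_(j < d) dx j (fun q => rho q * u j q) p = 0) ->
  (forall (i : 'I_d) p, D p ->
     dt (fun q => rho q * u i q) p
     + \sum_(j < d) dx j (fun q => rho q * u i q * u j q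
                                   + (if i == j then Sigma q else 0)) p = 0) ->
  (forall p, D p ->
     Sigma p / rho p
     - alpha * \sum_(j < d) dx j (fun q => dx j Sigma q / rho q) p
     = alpha * \sum_(i < d) \sum_(j < d) dx j (u i) p * dx i (u j) p) ->
  let KE : pt R d -> R := fun q =>
    2^-1 * rho q * (\sum_(i < d) u i q ^+ 2
                    + alpha * (\sum_(i < d) dx i (u i) q) ^+ 2) in
  forall p, D p ->
    dt KE p + \sum_(j < d) dx j (fun q => (KE q + Sigma q) * u j q) p = 0.
Proof.
move=> Omega_open I_open _ D rho_smooth Sigma_smooth u_smooth rho_gt0
  continuity momentum Sigma_equation KE p Dp.
have D_nbhs q : D q -> nbhs q D.
  by case=> Iq Oq; apply: nbhs_setX; [exact: I_open | exact: Omega_open].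
have rho_neq0 q : D q -> rho q != 0 by move=> Dq; rewrite gt_eqF ?rho_gt0.
exact: (kinetic_energy_balance D_nbhs rho_smooth Sigma_smooth u_smooth rho_neq0
  continuity momentum Sigma_equation Dp).
Qed.
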